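(* Let $G=(V,D,B)$ be a mixed graph on $n$ nodes with covariance matrix $\Sigma=\phi_G(\Lambda,\Omega)=(I-\Lambda)^{-T}\Omega(I-\Lambda)^{-1}$. Let $S=\{s_1,\dots,s_k\}$ and $T=\{t_1,\dots,t_k\}\subset V$, and for every $1\le i\le k$ let $H_i=\{h^i_1,\dots,h^i_{\ell_i}\}\subset\mathrm{pa}(s_i)$. Suppose there exists a half-trek system from $S$ to $T$ with no sided intersection. Then the $k\times k$ matrix $A$ with entries $$A_{ij}=\Sigma_{s_it_j}-\sum_{m=1}^{\ell_i}\Sigma_{h^i_mt_j}\lambda_{h^i_ms_i}$$ is generically invertible, i.e. $\det A$ is not identically zero as a function of $(\Lambda,\Omega)$ (so $\det A\neq 0$ for all parameters outside a proper algebraic subset of the parameter space).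
   Context: A mixed graph $G=(V,D,B)$ has directed edges $D$ ($v\to w$) and symmetric bidirected edges $B$ ($v\leftrightarrow w$), no self-loops; $\mathrm{pa}(v)=\{w:w\to v\in G\}$. Parameters: $\Lambda=(\lambda_{uv})$ real (or indeterminate) supported on $D$ with $I-\Lambda$ invertible, $\Omega$ positive definite with $\omega_{uv}=0$ for $u\ne v$ unless $u\leftrightarrow v\in G$. A path is a sequence of edges (directed edges may be traversed in either direction, vertices may repeat). A trek from $v$ to $w$ is a path of the form $v=v^L_l\leftarrow\cdots\leftarrow v^L_0\leftrightarrow v^R_0\to\cdots\to v^R_r=w$ (Left side $\{v^L_0,\dots,v^L_l\}$, Right side $\{v^R_0,\dots,v^R_r\}$) or $v=v^L_l\leftarrow\cdots\leftarrow v^L_1\leftarrow v^T\to v^R_1\to\cdots\to v^R_r=w$ (Left side $\{v^T,v^L_1,\dots,v^L_l\}$, Right side $\{v^T,v^R_1,\dots,v^R_r\}$), possibly empty. A half-trek is a trek whose Left side has exactly one vertex. A half-trek system from $S$ to $T$ is a collection of half-treks with set of sources $S$ and set of targets $T$; it has no sided intersection if distinct half-treks have disjoint Left sides and disjoint Right sides. *)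

From HB Require Import structures.
From mathcomp Require Import all_boot all_order all_algebra.
From mathcomp Require Import reals.
Set Implicit Arguments. Unset Strict Implicit. Unset Printing Implicit Defensive.
Import Order.TTheory GRing.Theory Num.Theory.
Local Open Scope ring_scope.

Definition mixed_graph (n : nat) (D B : rel 'I_n) : Prop :=
  (forall v, ~~ D v v) /\ (forall v, ~~ B v v) /\ (forall u v, B u v = B v u).

(* A half-trek (left side a single vertex v) is either
   - HTdir v r :  v -> r_1 -> ... -> r_m   (top v; Right side {v} ∪ r; m = 0 is
                  the empty trek from v to v), or
   - HTbi v u r : v <-> u -> r_1 -> ... -> r_m (Right side {u} ∪ r).
   Vertices may repeat. *)
Inductive halftrek (n : nat) :=
  | HTdir of 'I_n & seq 'I_n
  | HTbi of 'I_n & 'I_n & seq 'I_n.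

Definition ht_valid n (D B : rel 'I_n) (p : halftrek n) : bool :=
  match p with
  | HTdir v r => path D v r
  | HTbi v u r => B v u && path D u r
  end.

Definition ht_source n (p : halftrek n) : 'I_n :=
  match p with HTdir v _ => v | HTbi v _ _ => v end.

Definition ht_target n (p : halftrek n) : 'I_n :=
  match p with HTdir v r => last v r | HTbi _ u r => last u r end.

Definition ht_left n (p : halftrek n) : {set 'I_n} := [set ht_source p].

Definition ht_right n (p : halftrek n) : {set 'I_n} :=
  match p with HTdir v r => [set x in v :: r] | HTbi _ u r => [set x in u :: r] end.

Definition has_nsi_halftrek_system n (D B : rel 'I_n) (S T : {set 'I_n}) : Prop :=
  exists m (pi : 'I_m -> halftrek n),
    [/\ forall i, ht_valid D B (pi i),
        [set ht_source (pi i) | i in 'I_m] = S,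
        [set ht_target (pi i) | i in 'I_m] = T &
        forall i j, i != j ->
          [disjoint ht_left (pi i) & ht_left (pi j)] &&
          [disjoint ht_right (pi i) & ht_right (pi j)]].

Definition param_space (R : realType) n (D B : rel 'I_n)
    (Lambda Omega : 'M[R]_n) : Prop :=
  [/\ forall u v, ~~ D u v -> Lambda u v = 0,
      (1%:M - Lambda) \in unitmx,
      Omega^T = Omega,
      forall x : 'rV[R]_n, x != 0 -> 0 < (x *m Omega *m x^T) ord0 ord0 &
      forall u v, u != v -> ~~ B u v -> Omega u v = 0].

Definition phiG (R : realType) n (Lambda Omega : 'M[R]_n) : 'M[R]_n :=
  (invmx (1%:M - Lambda))^T *m Omega *m invmx (1%:M - Lambda).

Definition pa n (D : rel 'I_n) (v : 'I_n) : {set 'I_n} := [set w | D w v].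

Definition matA (R : realType) n k (s t : 'I_k -> 'I_n) (H : 'I_k -> {set 'I_n})
    (Lambda Omega : 'M[R]_n) : 'M[R]_k :=
  let Sigma := phiG Lambda Omega in
  \matrix_(i, j) (Sigma (s i) (t j)
                  - \sum_(h in H i) Sigma h (t j) * Lambda h (s i)).

From HB Require Import structures.
From mathcomp Require Import all_boot all_order all_algebra.
From mathcomp Require Import reals.
From mathcomp Require Import fingroup perm.
From mathcomp Require Import lra.
Set Implicit Arguments. Unset Strict Implicit. Unset Printing Implicit Defensive.
Import Order.TTheory GRing.Theory Num.Theory.
Local Open Scope ring_scope.

(* Put weight only on the half-trek system.  After shortening, the half-treks
   are vertex-disjoint simple directed paths, the i-th one running from a vertex
   top_i (equal or bidirected-adjacent to s_i) to the target t_(sigma i).  Let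
   Lambda be the 0/1 adjacency matrix of these paths, so that (I - Lambda)^-1 is
   their reachability matrix X, and let Omega = Gamma^T Gamma + e I where row i
   of Gamma is e_(s i) + g e_(top i).  Then A = (Gamma V)^T (Gamma W) + e V^T W,
   where V = X C for the matrix C of the row operations defining A and W is
   formed by the target columns of X.  The source rows of V are unitriangular
   for the reachability order, so det (Gamma V) is a nonzero polynomial in g,
   and Gamma W is strictly diagonally dominant for g >= 2 because every vertex
   lies on at most one path.  A suitable g >= 2 makes the e = 0 term invertible,
   so det A is a nonzero polynomial in e and some e >= 1 is not a root. *)

Lemma det_graded_unitriangular (R : comPzRingType) k (A : 'M[R]_k)
    (f : 'I_k -> nat) :
  (forall i, A i i = 1) -> (forall i j, i != j -> A i j != 0 -> (f i < f j)%N) ->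
  \det A = 1.
Proof.
move=> A_diag A_graded; rewrite /determinant (bigD1 1%g) //= [X in _ + X]big1.
  by rewrite odd_perm1 expr0 mul1r addr0; apply: big1 => i _; rewrite perm1 A_diag.
move=> sg sg_neq1; suff /existsP [i /eqP Ai0] : [exists i, A i (sg i) == 0].
  by rewrite (bigD1 i) //= Ai0 mul0r mulr0.
apply: contraR sg_neq1 => /existsPn sg_supp.
have le_f i : (f i <= f (sg i))%N.
  by case: (eqVneq i (sg i)) => [<- // | ne]; apply/ltnW/A_graded.
apply/eqP/permP => i; rewrite perm1; apply/eqP; apply: contraT => moved.
suff : (\sum_j f j < \sum_j f (sg j))%N by rewrite (reindex_inj (@perm_inj _ sg)) ltnn.
rewrite (bigD1 i) //= [X in (_ < X)%N](bigD1 i) //= -addSn leq_add //.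
  by apply: A_graded; rewrite // eq_sym.
by apply: leq_sum => j _; apply: le_f.
Qed.

Lemma det_diag_dominant_neq0 (R : realFieldType) k (A : 'M[R]_k) :
  (forall i, \sum_(j | j != i) `|A i j| < `|A i i|) -> \det A != 0.
Proof.
move=> A_dom; rewrite -det_tr; apply/negP => /det0P [v v_neq0 vA0].
have [i0 vi0_neq0] : exists i, v 0 i != 0.
  apply/existsP; apply: contraR v_neq0 => /existsPn v0.
  by apply/eqP/rowP => i; rewrite mxE; apply/eqP/negPn/v0.
have [j _ v_max] := @arg_maxP _ R _ i0 xpredT (fun l => `|v 0 l|) isT.
have vj_gt0 : 0 < `|v 0 j|.
  by apply: lt_le_trans (v_max i0 isT); rewrite normr_gt0.
have row_j : A j j * v 0 j = - \sum_(l | l != j) A j l * v 0 l.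
  have : \sum_l A j l * v 0 l = 0.
    move/rowP: vA0 => /(_ j); rewrite !mxE; apply: etrans.
    by apply: eq_bigr => l _; rewrite !mxE mulrC.
  by rewrite (bigD1 j) //= => /eqP; rewrite addr_eq0 => /eqP.
have : `|A j j| * `|v 0 j| <= (\sum_(l | l != j) `|A j l|) * `|v 0 j|.
  rewrite -normrM row_j normrN mulr_suml; apply: le_trans (ler_norm_sum _ _ _) _.
  by apply: ler_sum => l _; rewrite normrM; apply: ler_wpM2l => //; apply: v_max.
by rewrite ler_pM2r // leNgt A_dom.
Qed.

Lemma det_pencil_neq0 (R : numFieldType) k (A0 A1 : 'M[R]_k) (c : R) :
  \det A0 != 0 -> exists2 x, c <= x & \det (A0 + x *: A1) != 0.
Proof.
move=> A0_neq0.
pose p := \det (map_mx polyC A0 + 'X *: map_mx polyC A1).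
have p_eval x : p.[x] = \det (A0 + x *: A1).
  rewrite -horner_evalE /p -det_map_mx; congr (\det _); apply/matrixP => i j.
  by rewrite !mxE /= horner_evalE hornerD hornerM hornerX !hornerC.
have p_neq0 : p != 0.
  by apply: contraNneq A0_neq0 => p0; rewrite -[A0]addr0 -(scale0r A1) -p_eval p0 horner0.
pose xs := [seq c + i%:R | i <- iota 0 (size p)].
have xs_uniq : uniq xs.
  by rewrite map_inj_uniq ?iota_uniq // => i j /addrI /eqP; rewrite eqr_nat => /eqP.
have /allPn [x /mapP [i _ ->] px_neq0] : ~~ all (root p) xs.
  by apply/negP => /(max_poly_roots p_neq0) /(_ xs_uniq); rewrite size_map size_iota ltnn.
by exists (c + i%:R); rewrite ?lerDl ?ler0n // -p_eval.
Qed.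

Lemma det_colsub_perm (R : comPzRingType) k (A : 'M[R]_k) (sigma : 'I_k -> 'I_k)
    (sigma_inj : injective sigma) :
  \det (colsub sigma A) = (-1) ^+ perm sigma_inj * \det A.
Proof.
rewrite -(eq_colsub _ (permE sigma_inj)) -col_permEsub col_permE det_mulmx.
by rewrite det_perm odd_permV mulrC.
Qed.

Lemma mul_tr_sqr_ge0 (R : realDomainType) m (y : 'rV[R]_m) : 0 <= (y *m y^T) 0 0.
Proof. by rewrite mxE; apply: sumr_ge0 => i _; rewrite mxE -expr2 sqr_ge0. Qed.

Lemma mul_tr_sqr_gt0 (R : realDomainType) m (y : 'rV[R]_m) :
  y != 0 -> 0 < (y *m y^T) 0 0.
Proof.
move=> y_neq0; rewrite lt0r mul_tr_sqr_ge0 andbT; apply: contraNneq y_neq0.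
have y2_ge0 i : true -> 0 <= y 0 i * y^T i 0 by rewrite mxE -expr2 sqr_ge0.
rewrite mxE => /(psumr_eq0P y2_ge0) y2_eq0; apply/eqP/rowP => i; rewrite mxE.
by apply/eqP; rewrite -sqrf_eq0 expr2; have := y2_eq0 i isT; rewrite mxE => ->.
Qed.

Lemma gram_add_scalar_posdef (R : realDomainType) m n (G : 'M[R]_(m, n))
    (e : R) (x : 'rV_n) :
  0 < e -> x != 0 -> 0 < (x *m (G^T *m G + e%:M) *m x^T) 0 0.
Proof.
move=> e_gt0 x_neq0.
have -> : x *m (G^T *m G + e%:M) *m x^T = (x *m G^T) *m (x *m G^T)^T + e *: (x *m x^T).
  by rewrite mulmxDr mulmxDl mul_mx_scalar -scalemxAl trmx_mul trmxK !mulmxA.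
by rewrite mxE [X in _ + X]mxE ltr_wpDl ?mul_tr_sqr_ge0 // mulr_gt0 ?mul_tr_sqr_gt0.
Qed.

Lemma connect_eqVstep (T : finType) (e : rel T) a b :
  connect e a b = (a == b) || [exists c, e a c && connect e c b].
Proof.
apply/idP/idP => [/connectP [[|c p] /= ab_path ->] | ].
- by rewrite eqxx.
- case/andP: ab_path => ac cp; apply/orP; right; apply/existsP; exists c.
  by rewrite ac; apply/connectP; exists p.
- case/orP => [/eqP <- | /existsP [c /andP [ac cb]]]; first exact: connect0.
  exact: connect_trans (connect1 ac) cb.
Qed.

Section ConnectPotential.
Variables (T : finType) (e : rel T) (f : T -> nat).
Hypothesis e_incr : forall a b, e a b -> (f a < f b)%N.

Lemma connect_potential_leq a b : connect e a b -> (f a <= f b)%N.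
Proof.
move=> /connectP [p + ->]; elim: p a => [|c p IHp] a //= /andP [ac cp].
exact: leq_trans (ltnW (e_incr ac)) (IHp c cp).
Qed.

Lemma connect_acyclic a b : e a b -> ~~ connect e b a.
Proof.
by move=> ab; apply/negP => /connect_potential_leq; rewrite leqNgt e_incr.
Qed.

End ConnectPotential.

Definition adjmx (R : pzSemiRingType) n (e : rel 'I_n) : 'M[R]_n :=
  \matrix_(a, b) (e a b)%:R.

Definition reachmx (R : pzSemiRingType) n (e : rel 'I_n) : 'M[R]_n :=
  \matrix_(a, b) (connect e a b)%:R.

Section FunctionalAcyclicRelation.
Variables (n : nat) (e : rel 'I_n).
Hypothesis e_functional : forall a b c, e a b -> e a c -> b = c.
Hypothesis e_acyclic : forall a b, e a b -> ~~ connect e b a.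

Lemma connect_antisym a b : connect e a b -> connect e b a -> a = b.
Proof.
rewrite connect_eqVstep => /orP [/eqP // | /existsP [c /andP [ac cb]]] ba.
by move: (e_acyclic ac); rewrite (connect_trans cb ba).
Qed.

Lemma connect_succ a c b : e a c -> connect e a b = (a == b) || connect e c b.
Proof.
move=> ac; rewrite connect_eqVstep; congr (_ || _); apply/existsP/idP => [[d]|cb].
  by case/andP => ad; rewrite (e_functional ac ad).
by exists c; rewrite ac.
Qed.

Lemma mulmx_1_sub_adjmx (R : pzRingType) :
  (1%:M - adjmx R e) *m reachmx R e = 1%:M.
Proof.
apply/matrixP => a b; rewrite mulmxBl mul1mx !mxE.
case: (pickP (e a)) => [c ac | no_succ].
  rewrite (bigD1 c) //= big1 => [|d dc]; last first.
    rewrite !mxE; case: (boolP (e a d)) => [ad | _]; last by rewrite mul0r.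
    by rewrite (e_functional ac ad) eqxx in dc.
  rewrite !mxE ac mul1r addr0 (connect_succ b ac).
  case: eqVneq => [<- | _] /=; last by rewrite subrr.
  by rewrite (negbTE (e_acyclic ac)) subr0.
rewrite big1 => [|d _]; last by rewrite !mxE no_succ mul0r.
rewrite subr0 connect_eqVstep; suff /negbTE -> : ~~ [exists d, e a d && connect e d b].
  by rewrite orbF.
by apply/existsPn => d; rewrite no_succ.
Qed.

Lemma invmx_1_sub_adjmx (R : comUnitRingType) :
  (1%:M - adjmx R e) \in unitmx /\ invmx (1%:M - adjmx R e) = reachmx R e.
Proof.
have unit_adj := (mulmx1_unit (mulmx_1_sub_adjmx R)).1; split => //.
have := congr1 (mulmx (invmx (1%:M - adjmx R e))) (mulmx_1_sub_adjmx R).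
by rewrite mulmxA mulVmx // mul1mx mulmx1.
Qed.

End FunctionalAcyclicRelation.

Section DisjointPaths.
Variables (n k : nat) (P : 'I_k -> seq 'I_n).
Hypothesis P_uniq : forall i, uniq (P i).
Hypothesis P_disjoint : forall i j x, x \in P i -> x \in P j -> i = j.

Definition path_step a b :=
  [exists i, [&& a \in P i, b \in P i & index b (P i) == (index a (P i)).+1]].

Lemma path_stepE i a b : a \in P i ->
  path_step a b = (b \in P i) && (index b (P i) == (index a (P i)).+1).
Proof.
move=> ai; apply/existsP/idP => [[j /and3P [aj bj ij]] | /andP [bi ib]].
  by rewrite -(P_disjoint ai aj) in bj ij *; rewrite bj ij.
by exists i; rewrite ai bi ib.
Qed.

Lemma path_step_functional a b c : path_step a b -> path_step a c -> b = c.
Proof.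
case/existsP => i /and3P [ai bi /eqP ib]; rewrite (path_stepE _ ai) => /andP [ci /eqP ic].
by rewrite -(nth_index a bi) -(nth_index a ci) ib ic.
Qed.

(* Off P j, index x (P j) is size (P j); hence a step raises exactly one
   summand, by one. *)
Lemma path_step_incr a b :
  path_step a b -> (\sum_i index a (P i) < \sum_i index b (P i))%N.
Proof.
case/existsP => i /and3P [ai bi /eqP ib].
rewrite (bigD1 i) //= [X in (_ < X)%N](bigD1 i) //= ib addSn ltnS leq_add2l.
apply/eq_leq/eq_bigr => j ji.
have outside x : x \in P i -> x \notin P j.
  by move=> xi; apply: contra ji => /(P_disjoint xi) ->.
by rewrite !memNindex ?outside.
Qed.

Lemma path_step_acyclic a b : path_step a b -> ~~ connect path_step b a.
Proof. exact: (@connect_acyclic _ _ (fun x => \sum_i index x (P i)) path_step_incr). Qed.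

Lemma path_step_sub (e : rel 'I_n) :
  (forall i, sorted e (P i)) -> forall a b, path_step a b -> e a b.
Proof.
move=> e_sorted a b /existsP [i /and3P [ai bi /eqP ib]].
move/(sortedP a): (e_sorted i) => /(_ (index a (P i))).
by rewrite -ib index_mem bi !nth_index //; apply.
Qed.

Lemma sorted_path_step i : sorted path_step (P i).
Proof.
case Pi: (P i) => [//|x p]; apply/(sortedP x) => m m_lt; rewrite -Pi in m_lt *.
have m_lt' := ltnW m_lt.
by rewrite (path_stepE _ (mem_nth x m_lt')) mem_nth //= !index_uniq.
Qed.

Lemma sum_mem_le1 (R : numDomainType) x : \sum_i ((x \in P i)%:R : R) <= 1.
Proof.
case: (pickP (fun i => x \in P i)) => [i xi | x_out]; last first.
  by rewrite big1 ?ler01 // => i _; rewrite x_out.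
rewrite (bigD1 i) //= xi big1 ?addr0 // => j ji.
by case: (boolP (x \in P j)) => // xj; rewrite (P_disjoint xi xj) eqxx in ji.
Qed.

Lemma connect_path_step_last i x p a :
  P i = x :: p -> connect path_step a (last x p) = (a \in P i).
Proof.
move=> Pi; apply/idP/idP => [a_last | ai].
  have P_closed : closed path_step (P i).
    move=> c d /existsP [j /and3P [cj dj _]].
    by apply/idP/idP => [ci | di];
      [rewrite (P_disjoint ci cj) | rewrite (P_disjoint di dj)].
  by rewrite (closed_connect P_closed a_last) Pi mem_last.
have := sorted_path_step i; rewrite -[last x p]/(last a (x :: p)) -Pi.
case/splitPr: ai => p1 p2; rewrite sorted_cat_cons last_cat /= => /andP [_ a_path].
by apply/connectP; exists p2.
Qed.

End DisjointPaths.

Section HalfTreks.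
Variables (n : nat) (D B : rel 'I_n).

Definition ht_top (q : halftrek n) : 'I_n :=
  match q with HTdir v _ => v | HTbi _ u _ => u end.

Definition ht_tail (q : halftrek n) : seq 'I_n :=
  match q with HTdir _ r => r | HTbi _ _ r => r end.

Definition ht_seq (q : halftrek n) : seq 'I_n := ht_top q :: ht_tail q.

Definition ht_shorten (q : halftrek n) : halftrek n :=
  match q with
  | HTdir v r => HTdir v (shorten v r)
  | HTbi v u r => HTbi v u (shorten u r)
  end.

Lemma ht_rightE q : ht_right q = [set x in ht_seq q].
Proof. by case: q. Qed.

Lemma ht_targetE q : ht_target q = last (ht_top q) (ht_tail q).
Proof. by case: q. Qed.

Lemma mem_ht_target q : ht_target q \in ht_seq q.
Proof. by rewrite ht_targetE mem_last. Qed.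

Lemma ht_valid_path q : ht_valid D B q -> path D (ht_top q) (ht_tail q).
Proof. by case: q => //= v u r /andP []. Qed.

Lemma ht_valid_top q :
  ht_valid D B q -> ht_source q != ht_top q -> B (ht_source q) (ht_top q).
Proof. by case: q => [v r _ | v u r /andP []] //=; rewrite eqxx. Qed.

Lemma ht_shortenP q : ht_valid D B q ->
  [/\ ht_valid D B (ht_shorten q), uniq (ht_seq (ht_shorten q)),
      ht_source (ht_shorten q) = ht_source q,
      ht_target (ht_shorten q) = ht_target q &
      {subset ht_seq (ht_shorten q) <= ht_seq q}].
Proof.
have sub_cons (x : 'I_n) p p' : {subset p' <= p} -> {subset x :: p' <= x :: p}.
  by move=> sub y; rewrite !inE => /orP [-> // | /sub ->]; rewrite orbT.
case: q => [v r | v u r] /=; last case/andP => Buv.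
  by case/shortenP => p' p'_path p'_uniq /(sub_cons v); split.
by case/shortenP => p' p'_path p'_uniq /(sub_cons u); split; rewrite ?Buv.
Qed.

Lemma nsi_system_simple k (s : 'I_k -> 'I_n) (T : {set 'I_n}) :
  injective s -> has_nsi_halftrek_system D B [set s i | i in 'I_k] T ->
  exists q : 'I_k -> halftrek n,
    [/\ forall i, ht_valid D B (q i), forall i, uniq (ht_seq (q i)),
        forall i, ht_source (q i) = s i, forall i, ht_target (q i) \in T &
        forall i j x, x \in ht_seq (q i) -> x \in ht_seq (q j) -> i = j].
Proof.
move=> s_inj [m [pi [pi_valid pi_source pi_target pi_nsi]]].
have /fin_all_exists [rho rhoP] i : exists j, ht_source (pi j) = s i.
  have : s i \in [set ht_source (pi j) | j in 'I_m] by rewrite pi_source imset_f.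
  by case/imsetP => j _ ->; exists j.
exists (fun i => ht_shorten (pi (rho i))).
have qP i := ht_shortenP (pi_valid (rho i)).
split=> [i | i | i | i | i j x]; first by case: (qP i).
- by case: (qP i).
- by case: (qP i) => _ _ ->.
- by case: (qP i) => _ _ _ ->; rewrite -pi_target imset_f.
case: (qP i) (qP j) => _ _ _ _ sub_i [_ _ _ _ sub_j] /sub_i xi /sub_j xj.
have [eq_rho | ne_rho] := eqVneq (rho i) (rho j).
  by apply: s_inj; rewrite -!rhoP eq_rho.
case/andP: (pi_nsi _ _ ne_rho) => _ /disjointFr.
by rewrite !ht_rightE => /(_ x); rewrite !in_set xi xj => /(_ isT).
Qed.

End HalfTreks.

Section GenericPoint.
Variables (R : realType) (n k : nat) (D B : rel 'I_n).
Variables (s : 'I_k -> 'I_n) (H : 'I_k -> {set 'I_n}) (q : 'I_k -> halftrek n).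
Hypothesis B_sym : forall u v, B u v = B v u.
Hypothesis s_inj : injective s.
Hypothesis q_valid : forall i, ht_valid D B (q i).
Hypothesis q_uniq : forall i, uniq (ht_seq (q i)).
Hypothesis q_source : forall i, ht_source (q i) = s i.
Hypothesis q_disjoint :
  forall i j x, x \in ht_seq (q i) -> x \in ht_seq (q j) -> i = j.

Local Notation P i := (ht_seq (q i)).
Local Notation top i := (ht_top (q i)).
Local Notation tau i := (ht_target (q i)).
Local Notation step := (path_step (fun i => P i)).

Definition Lambda_paths : 'M[R]_n := adjmx R step.

Definition Gamma_paths (g : R) : 'M[R]_(k, n) :=
  rowsub s 1%:M + g *: rowsub (fun i => top i) 1%:M.

Definition Omega_paths (g e : R) : 'M[R]_n := (Gamma_paths g)^T *m Gamma_paths g + e%:M.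

(* (I - Lambda_paths)^-1 C, where column i of C is
   e_(s i) - \sum_(h in H i) lambda_(h, s i) e_h. *)
Definition matA_left : 'M[R]_(n, k) := \matrix_(a, i)
  ((connect step a (s i))%:R
   - \sum_(h in H i) (connect step a h)%:R * (step h (s i))%:R).

Definition matA_right : 'M[R]_(n, k) := colsub (fun j => tau j) (reachmx R step).

Lemma step_acyclic a b : step a b -> ~~ connect step b a.
Proof. exact: path_step_acyclic. Qed.

Lemma invmx_Lambda_paths :
  (1%:M - Lambda_paths) \in unitmx /\ invmx (1%:M - Lambda_paths) = reachmx R step.
Proof. exact: (invmx_1_sub_adjmx (path_step_functional q_disjoint) step_acyclic R). Qed.

Lemma matA_factor Omega :
  matA s (fun j => tau j) H Lambda_paths Omega = matA_left^T *m (Omega *m matA_right).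
Proof.
apply/matrixP => i j; set Y := Omega *m matA_right.
have SigmaE a : phiG Lambda_paths Omega a (tau j) = \sum_c (connect step c a)%:R * Y c j.
  rewrite /phiG invmx_Lambda_paths.2 -mulmxA mxE /Y mulmx_colsub.
  by apply: eq_bigr => c _; rewrite !mxE.
rewrite /matA /= mxE SigmaE.
under eq_bigr => h _ do rewrite SigmaE mulr_suml.
rewrite exchange_big -sumrB mxE; apply: eq_bigr => c _.
rewrite !mxE mulrBl mulr_suml; congr (_ - _); apply: eq_bigr => h _.
by rewrite mxE mulrAC.
Qed.

Lemma matA_left_diag i : matA_left (s i) i = 1.
Proof.
rewrite mxE connect0 big1 ?subr0 // => h _.
have [hs | _] := boolP (step h (s i)); last by rewrite mulr0.
by rewrite (negbTE (step_acyclic hs)) mul0r.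
Qed.

Lemma matA_left_support a i : matA_left a i != 0 -> connect step a (s i).
Proof.
apply: contraR => a_ns; rewrite mxE (negbTE a_ns) sub0r big1 ?oppr0 // => h _.
have [ah | _] := boolP (connect step a h); last by rewrite mul0r.
have [hs | _] := boolP (step h (s i)); last by rewrite mulr0.
by rewrite (connect_trans ah (connect1 hs)) in a_ns.
Qed.

Lemma det_rowsub_matA_left : \det (rowsub s matA_left) = 1.
Proof.
apply: (det_graded_unitriangular (f := fun i => #|[set a | connect step a (s i)]|)).
  by move=> i; rewrite mxE matA_left_diag.
move=> i j ij; rewrite mxE => /matA_left_support sij; apply/proper_card/properP; split.
  by apply/subsetP => a; rewrite !inE => /connect_trans; apply.
exists (s j); rewrite !inE ?connect0 //; apply: contra ij => sji.
by apply/eqP/s_inj/(connect_antisym step_acyclic).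
Qed.

Lemma connect_step_target a j : connect step a (tau j) = (a \in P j).
Proof.
by rewrite ht_targetE (connect_path_step_last q_uniq q_disjoint _ (erefl (P j))).
Qed.


Lemma Gamma_mulmx g m (F : 'M[R]_(n, m)) :
  Gamma_paths g *m F = rowsub s F + g *: rowsub (fun i => top i) F.
Proof. by rewrite mulmxDl -scalemxAl -!rowsubE. Qed.

Lemma det_Gamma_matA_right g : 2 <= g -> \det (Gamma_paths g *m matA_right) != 0.
Proof.
move=> g_ge2; rewrite Gamma_mulmx; apply: det_diag_dominant_neq0 => l.
have top_in j : (top l \in P j) = (j == l).
  by apply/idP/eqP => [tj | ->]; [apply: q_disjoint tj (mem_head _ _) | apply: mem_head].
have entryE j : (rowsub s matA_right + g *: rowsub (fun i => top i) matA_right) l j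
    = (s l \in P j)%:R + g * (j == l)%:R.
  by rewrite !mxE !connect_step_target top_in.
under eq_bigr => j jl do rewrite entryE (negbTE jl) mulr0 addr0 normr_nat.
rewrite entryE eqxx mulr1 ger0_norm ?addr_ge0 ?(le_trans _ g_ge2) //.
have := sum_mem_le1 q_disjoint R (s l); rewrite (bigD1 l) //=.
have : 0 <= ((s l \in P l)%:R : R) by [].
lra.
Qed.

Lemma Gamma_support g l a : Gamma_paths g l a != 0 -> (a == s l) || (a == top l).
Proof.
apply: contraR; rewrite negb_or => /andP [a_s a_top].
by rewrite !mxE ![_ == a]eq_sym (negbTE a_s) (negbTE a_top) mulr0 addr0.
Qed.

Lemma param_space_paths g e : 0 < e -> param_space D B Lambda_paths (Omega_paths g e).
Proof.
move=> e_gt0; split.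
- move=> u v uv_nD; rewrite mxE; case: (boolP (step u v)) => // uv.
  have D_sorted i : sorted D (P i) by apply: ht_valid_path.
  by rewrite (path_step_sub D_sorted uv) in uv_nD.
- exact: invmx_Lambda_paths.1.
- by rewrite /Omega_paths raddfD /= trmx_mul trmxK tr_scalar_mx.
- by move=> x; apply: gram_add_scalar_posdef.
move=> u v uv uv_nB; rewrite !mxE (negbTE uv) mulr0n addr0.
apply: big1 => l _; rewrite mxE.
have [-> | /Gamma_support Gu] := eqVneq (Gamma_paths g l u) 0; first by rewrite mul0r.
have [-> | /Gamma_support Gv] := eqVneq (Gamma_paths g l v) 0; first by rewrite mulr0.
have B_top : s l != top l -> B (s l) (top l) by rewrite -q_source; apply: ht_valid_top.
move: uv uv_nB; case/orP: Gu => /eqP ->; case/orP: Gv => /eqP -> //; rewrite ?eqxx //.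
  by move=> /B_top ->.
by rewrite eq_sym B_sym => /B_top ->.
Qed.

Lemma generic_point : exists Lambda Omega : 'M[R]_n, param_space D B Lambda Omega /\
  \det (matA s (fun j => tau j) H Lambda Omega) != 0.
Proof.
have det_sV : \det (rowsub s matA_left) != 0 by rewrite det_rowsub_matA_left oner_neq0.
have [g g_ge2 det_GV] := det_pencil_neq0 (rowsub (fun i => top i) matA_left) 2 det_sV.
have det_A0 : \det ((Gamma_paths g *m matA_left)^T *m (Gamma_paths g *m matA_right)) != 0.
  by rewrite det_mulmx det_tr mulf_neq0 ?det_Gamma_matA_right // Gamma_mulmx.
have [e e_ge1 det_A] := det_pencil_neq0 (matA_left^T *m matA_right) 1 det_A0.
exists Lambda_paths, (Omega_paths g e); split.
  by apply: param_space_paths; apply: lt_le_trans e_ge1.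
rewrite matA_factor /Omega_paths mulmxDl mulmxDr mul_scalar_mx -scalemxAr.
by move: det_A; rewrite trmx_mul !mulmxA.
Qed.

End GenericPoint.

Lemma matA_colsub (R : realType) n k (s t tau : 'I_k -> 'I_n) (H : 'I_k -> {set 'I_n})
    (Lambda Omega : 'M[R]_n) (sigma : 'I_k -> 'I_k) :
  (forall j, tau j = t (sigma j)) ->
  matA s tau H Lambda Omega = colsub sigma (matA s t H Lambda Omega).
Proof. by move=> tauE; apply/matrixP => i j; rewrite !mxE tauE. Qed.

Theorem lemma4p2 (R : realType) (n k : nat) (D B : rel 'I_n)
    (s t : 'I_k -> 'I_n) (H : 'I_k -> {set 'I_n}) :
  mixed_graph D B ->
  injective s -> injective t ->
  (forall i, H i \subset pa D (s i)) ->
  has_nsi_halftrek_system D B [set s i | i in 'I_k] [set t i | i in 'I_k] ->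
  exists (Lambda Omega : 'M[R]_n),
    param_space D B Lambda Omega /\ \det (matA s t H Lambda Omega) != 0.
Proof.
move=> [_ [_ B_sym]] s_inj _ _ /(nsi_system_simple s_inj).
case=> q [q_valid q_uniq q_source q_target q_disjoint].
have [Lambda [Omega [param det_A]]] :=
  generic_point R H B_sym s_inj q_valid q_uniq q_source q_disjoint.
have /fin_all_exists [sigma tauE] i : exists j, ht_target (q i) = t j.
  by have /imsetP [j _ ->] := q_target i; exists j.
have sigma_inj : injective sigma.
  move=> i j eq_ij; apply: (q_disjoint _ _ _ (mem_ht_target (q i))).
  by rewrite tauE eq_ij -tauE mem_ht_target.
exists Lambda, Omega; split => //.
move: det_A; rewrite (matA_colsub _ _ _ _ tauE) (det_colsub_perm _ sigma_inj).
by rewrite mulf_eq0 negb_or => /andP [].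
Qed.
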